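(* Let $G$ be a maximal outerplanar graph. Then $G$ is in $B_0$ if and only if $G$ does not contain an induced subgraph isomorphic to $S_3$.
   Context: A graph is maximal outerplanar if it is outerplanar and adding any single new edge yields a non-outerplanar graph. $S_3$ is the graph with vertices $x_1,x_2,x_3,y_1,y_2,y_3$ and edges $\{x_1,x_2\},\{x_1,x_3\},\{x_2,x_3\},\{x_1,y_1\},\{x_2,y_1\},\{x_2,y_2\},\{x_3,y_2\},\{x_3,y_3\},\{x_1,y_3\}$. An EPG representation of a graph is a set of paths on a rectangular grid (sequences of grid points joined consecutively by grid edges), one per vertex, such that two vertices are adjacent iff their paths share a grid edge. $B_0$ is the class of graphs having an EPG representation in which no path has a bend (every path lies on a single grid line). *)

From HB Require Import structures.
From mathcomp Require Import all_boot all_order all_algebra.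
Set Implicit Arguments. Unset Strict Implicit. Unset Printing Implicit Defensive.
Import Order.TTheory GRing.Theory Num.Theory.

Definition simple_graph (T : finType) (e : rel T) : Prop :=
  symmetric e /\ irreflexive e.

(* Outerplanarity, combinatorially: the vertices can be placed in some
   cyclic (here: linear) order on a circle such that no two edges cross
   as chords, i.e. there are no edges ab, cd with a < c < b < d. *)
Definition outerplanar (T : finType) (e : rel T) : Prop :=
  exists pos : T -> nat, injective pos /\
    forall a b c d : T, e a b -> e c d ->
      ~ (pos a < pos c /\ pos c < pos b /\ pos b < pos d)%N.

Definition add_edge (T : finType) (e : rel T) (x y : T) : rel T :=
  fun u v => [|| e u v, (u == x) && (v == y) | (u == y) && (v == x)].

Definition maximal_outerplanar (T : finType) (e : rel T) : Prop :=
  outerplanar e /\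
  forall x y : T, x != y -> ~~ e x y -> ~ outerplanar (add_edge e x y).

(* S_3 on vertex set 'I_6: x1,x2,x3 = 0,1,2 ; y1,y2,y3 = 3,4,5. *)
Definition S3_edges : seq (nat * nat) :=
  [:: (0,1); (0,2); (1,2); (0,3); (1,3); (1,4); (2,4); (2,5); (0,5)]%N.

Definition S3 : rel 'I_6 :=
  fun i j => ((val i, val j) \in S3_edges) || ((val j, val i) \in S3_edges).

Definition has_induced_S3 (T : finType) (e : rel T) : Prop :=
  exists f : 'I_6 -> T, injective f /\ forall i j, e (f i) (f j) = S3 i j.

(* A path without bends on the integer grid: it lies on a horizontal
   (horiz = true, line y = line) or vertical (x = line) grid line and
   consists of the consecutive grid points lo, lo+1, ..., hi along it,
   with lo < hi (at least one grid edge).  Its grid edges are the unit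
   segments [k, k+1] with lo <= k < hi on that line. *)
Record segpath := SegPath { horiz : bool; line : int; lo : int; hi : int }.

Definition seg_valid (p : segpath) : bool := (lo p < hi p)%R.

Definition share_edge (p q : segpath) : bool :=
  [&& horiz p == horiz q, line p == line q &
      (Num.max (lo p) (lo q) < Num.min (hi p) (hi q))%R].

Definition B0 (T : finType) (e : rel T) : Prop :=
  exists P : T -> segpath,
    (forall v, seg_valid (P v)) /\
    (forall u v, u != v -> (e u v <-> share_edge (P u) (P v))).

From mathcomp Require Import all_boot all_order all_algebra.
From mathcomp Require Import zify.
Set Implicit Arguments. Unset Strict Implicit. Unset Printing Implicit Defensive.

(* A bend-free representation is an interval representation on each grid line, and
   S_3 (the 3-sun) is not an interval graph.

   Conversely, the positions witnessing outerplanarity place the vertices on a circle so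
   that no two edges cross as chords, and maximality says that every non-edge is crossed
   by an edge: the graph is a triangulated polygon.  It has an ear v, of degree two with
   adjacent neighbours u and w, and removing v leaves a triangulated polygon.  Without an
   induced S_3, one of u, w is an ear of the smaller polygon, its other neighbour being
   the apex x of the triangle on uw: otherwise the triangles on ux and wx, together with
   v, would form an S_3.  Peeling ears in this order builds an interval representation in
   which the current ear triangle reaches furthest to the right: the removed ear v is put
   back as [M, M+1], and u, w are stretched to M+1. *)

Lemma share_edge_line (P Q : segpath) :
  share_edge P Q -> horiz Q = horiz P /\ line Q = line P.
Proof. by case/and3P => /eqP -> /eqP ->. Qed.

Lemma share_edge_on_line (P Q : segpath) : seg_valid P -> seg_valid Q ->
  horiz Q = horiz P -> line Q = line P ->
  share_edge P Q = (lo P < hi Q)%R && (lo Q < hi P)%R.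
Proof. rewrite /share_edge /seg_valid => vP vQ -> ->; rewrite !eqxx /=; lia. Qed.

Lemma S3_not_B0 (Q : 'I_6 -> segpath) : (forall i, seg_valid (Q i)) ->
  ~ (forall i j, i != j -> share_edge (Q i) (Q j) = S3 i j).
Proof.
move=> Qv QS3; pose E i j (hi : i < 6) (hj : j < 6) := QS3 (Ordinal hi) (Ordinal hj).
have e01 : share_edge _ _ = true := E 0 1 isT isT isT.
have e02 : share_edge _ _ = true := E 0 2 isT isT isT.
have e12 : share_edge _ _ = true := E 1 2 isT isT isT.
have e03 : share_edge _ _ = true := E 0 3 isT isT isT.
have e13 : share_edge _ _ = true := E 1 3 isT isT isT.
have e14 : share_edge _ _ = true := E 1 4 isT isT isT.
have e24 : share_edge _ _ = true := E 2 4 isT isT isT.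
have e25 : share_edge _ _ = true := E 2 5 isT isT isT.
have e05 : share_edge _ _ = true := E 0 5 isT isT isT.
have n34 : share_edge _ _ = false := E 3 4 isT isT isT.
have n35 : share_edge _ _ = false := E 3 5 isT isT isT.
have n45 : share_edge _ _ = false := E 4 5 isT isT isT.
have n23 : share_edge _ _ = false := E 2 3 isT isT isT.
have n04 : share_edge _ _ = false := E 0 4 isT isT isT.
have n15 : share_edge _ _ = false := E 1 5 isT isT isT.
have [h1 l1] := share_edge_line e01; have [h2 l2] := share_edge_line e02.
have [h3 l3] := share_edge_line e03; have [h5 l5] := share_edge_line e05.
have [h4 l4] := share_edge_line e14.
move: e01 e02 e12 e03 e13 e14 e24 e25 e05 n34 n35 n45 n23 n04 n15.
rewrite !share_edge_on_line ?Qv //=; try congruence.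
move: (Qv (Ordinal (isT : 0 < 6))) (Qv (Ordinal (isT : 1 < 6))) (Qv (Ordinal (isT : 2 < 6))).
move: (Qv (Ordinal (isT : 3 < 6))) (Qv (Ordinal (isT : 4 < 6))) (Qv (Ordinal (isT : 5 < 6))).
rewrite /seg_valid; lia.
Qed.

Lemma B0_no_induced_S3 (T : finType) (e : rel T) : B0 e -> ~ has_induced_S3 e.
Proof.
case=> P [P_valid P_rep] [f [f_inj f_S3]].
apply: (@S3_not_B0 (P \o f)) => [i|i j ij]; first exact: P_valid.
have fij : f i != f j by rewrite (inj_eq f_inj).
by rewrite -f_S3; apply/idP/idP => /(P_rep _ _ fij).
Qed.

(* Positions are read around a circle: [crossing a b c d] says that the chords ab and cd
   cross, [beside a b y z] that y and z lie on the same side of the chord ab. *)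
Definition between (a b z : nat) := (a < z < b) || (b < z < a).
Definition outside (a b z : nat) := [&& z != a, z != b & ~~ between a b z].
Definition crossing (a b c d : nat) :=
  [&& c != a, c != b, d != a, d != b & between a b c != between a b d].
Definition beside (a b y z : nat) :=
  [&& y != a, y != b, z != a, z != b & between a b y == between a b z].

Tactic Notation "geometry" := unfold crossing, beside, outside, between in *; lia.
Tactic Notation "geometry" "using" ne_hyp_list(hs) := clear - hs; geometry.
Tactic Notation "lia" "using" ne_hyp_list(hs) := clear - hs; lia.

Lemma betweenC a b z : between a b z = between b a z.
Proof. by rewrite /between orbC. Qed.

Lemma crossingCr a b c d : crossing a b c d = crossing a b d c.
Proof. by geometry. Qed.

(* For positions below N, a rotation of the circle moving the positions below s last. *)
Definition rotate (N s x : nat) := if x < s then x + N else x.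

Lemma rotate_inj N s x y : x < N -> y < N -> rotate N s x = rotate N s y -> x = y.
Proof. rewrite /rotate; do 2 case: ifP; move=> *; lia. Qed.

Lemma crossing_rotate N s a b c d : a < N -> b < N -> c < N -> d < N ->
  crossing (rotate N s a) (rotate N s b) (rotate N s c) (rotate N s d) = crossing a b c d.
Proof. rewrite /rotate; do 4 case: ifP; move=> *; geometry. Qed.

Lemma between_rotate N a b z : a != b -> a < N -> b < N -> z < N ->
  let r := rotate N (minn a b).+1 in between (r a) (r b) (r z) = outside a b z.
Proof. rewrite /rotate /=; do 3 case: ifP; move=> *; geometry. Qed.

Section Polygon.
Variables (T : finType) (e : rel T).
Hypotheses (esym : symmetric e) (eirr : irreflexive e).
Implicit Types (p : T -> nat) (S : {set T}).

Definition noncrossing p S := forall a b c d, a \in S -> b \in S -> c \in S -> d \in S ->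
  e a b -> e c d -> ~~ crossing (p a) (p b) (p c) (p d).

Definition triangulated p S := forall a b, a \in S -> b \in S -> a != b -> ~~ e a b ->
  exists c d, [/\ c \in S, d \in S, e c d & crossing (p a) (p b) (p c) (p d)].

Definition triangulation p S := [/\ injective p, noncrossing p S & triangulated p S].

Definition ear S v u w := [/\ v \in S, u \in S, w \in S, e u w &
  forall y, y \in S -> e v y = (y == u) || (y == w)].

Lemma edge_neq a b : e a b -> a != b.
Proof. by apply: contraTneq => ->; rewrite eirr. Qed.

Lemma triangulation_rotate p S N s : (forall z, p z < N) ->
  triangulation p S -> triangulation (fun z => rotate N s (p z)) S.
Proof.
move=> pN [p_inj ncr tri]; split.
- by move=> y z /(rotate_inj (pN y) (pN z)) /p_inj.
- by move=> a b c d *; rewrite crossing_rotate //; exact: ncr.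
- move=> a b aS bS ab nab; have [c [d [cS dS ecd X]]] := tri a b aS bS ab nab.
  by exists c, d; rewrite crossing_rotate.
Qed.

Lemma edge_of_empty_side p S a b : triangulation p S -> a \in S -> b \in S -> a != b ->
  {in S, forall z, ~~ between (p a) (p b) (p z)} \/
  {in S, forall z, ~~ outside (p a) (p b) (p z)} -> e a b.
Proof.
move=> [_ _ tri] aS bS ab empty; apply/idPn => nab.
have [c [d [cS dS _]]] := tri a b aS bS ab nab.
by case: empty => /[dup] /(_ c cS) + /(_ d dS); geometry.
Qed.

Lemma inner_triangle p S a b z : triangulation p S -> a \in S -> b \in S -> z \in S ->
  e a b -> between (p a) (p b) (p z) ->
  exists2 k, k \in S & [/\ between (p a) (p b) (p k), e a k & e k b].
Proof.
move=> tS; wlog ab : a b / p a < p b => [W aS bS zS eab azb|].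
  case: (ltngtP (p a) (p b)) => [ab|ba|ab]; [exact: W | | by move: azb; rewrite ab; geometry].
  rewrite esym in eab; rewrite betweenC in azb.
  have [k kS [bkb ebk eka]] := W b a ba bS aS zS eab azb.
  by exists k; rewrite // betweenC [e a k]esym [e k b]esym.
move=> aS bS zS eab azb; have [p_inj ncr _] := tS.
pose inner y := (y \in S) && between (p a) (p b) (p y).
case: (arg_minnP p (_ : inner z)) => [|z0 /andP[z0S az0b] z0_min]; first exact/andP.
have eaz0 : e a z0.
  apply: (edge_of_empty_side tS) => //; first by apply: contraTneq az0b => <-; geometry.
  left=> y yS; apply/negP => ay; have := z0_min y; rewrite /inner yS /=.
  by move: ay az0b; geometry.
case: (@arg_maxnP _ z0 (fun y => inner y && e a y) p); first by rewrite /inner z0S az0b.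
move=> k /andP[/andP[kS akb] eak] k_max; exists k => //; split=> //.
apply/idPn => nkb; have [_ _ tri] := tS.
have kb : k != b by apply: contraTneq akb => ->; geometry using ab.
have [c [d [cS dS ecd]]] := tri k b kS bS kb nkb.
wlog kcb : c d cS dS ecd / between (p k) (p b) (p c) => [W X|].
  have [kcb|kdb] : between (p k) (p b) (p c) \/ between (p k) (p b) (p d).
    by geometry using X.
  - exact: W c d cS dS ecd kcb X.
  - have edc : e d c by rewrite esym.
    by apply: (W d c dS cS edc kdb); rewrite crossingCr.
move=> X; have [[dab|dak]|/p_inj da] :
    (outside (p a) (p b) (p d) \/ between (p a) (p k) (p d)) \/ p d = p a.
- by geometry using X akb kcb ab.
- by have := ncr a b c d aS bS cS dS eab ecd; geometry using X akb kcb dab.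
- by have := ncr a k c d aS kS cS dS eak ecd; geometry using X akb kcb dak.
- subst d; have := k_max c; rewrite /inner cS esym ecd andbT => kc.
  by geometry using X akb kcb ab kc.
Qed.

Lemma outer_triangle p S a b z : triangulation p S -> a \in S -> b \in S -> z \in S ->
  e a b -> outside (p a) (p b) (p z) ->
  exists2 k, k \in S & [/\ outside (p a) (p b) (p k), e a k & e k b].
Proof.
move=> tS aS bS zS eab azb; have [p_inj _ _] := tS.
have [N pN] : exists N, forall y, p y < N.
  by exists (\max_y p y).+1 => y; rewrite ltnS (leq_bigmax y).
have ab : p a != p b by rewrite (inj_eq p_inj) edge_neq.
have rE y := between_rotate ab (pN a) (pN b) (pN y).
rewrite -rE in azb.
have [k kS [akb eak ekb]] := inner_triangle (triangulation_rotate _ pN tS) aS bS zS eab azb.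
by exists k; rewrite // -rE.
Qed.

Lemma side_triangle p S a b z : triangulation p S -> a \in S -> b \in S -> z \in S ->
  e a b -> p z != p a -> p z != p b ->
  exists2 k, k \in S & [/\ e a k, e k b & beside (p a) (p b) (p k) (p z)].
Proof.
move=> tS aS bS zS eab za zb.
have [azb|azb] : between (p a) (p b) (p z) \/ outside (p a) (p b) (p z).
  by geometry using za zb.
- have [k kS [akb eak ekb]] := inner_triangle tS aS bS zS eab azb.
  by exists k => //; split=> //; geometry using akb azb.
- have [k kS [akb eak ekb]] := outer_triangle tS aS bS zS eab azb.
  by exists k => //; split=> //; geometry using akb azb.
Qed.

Lemma ear_sym S v u w : ear S v u w -> ear S v w u.
Proof. by case=> vS uS wS euw vN; split=> // [|y /vN ->]; rewrite 1?esym // orbC. Qed.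

Lemma induced_S3_of x1 x2 x3 y1 y2 y3 : uniq [:: x1; x2; x3; y1; y2; y3] ->
  e x1 x2 -> e x1 x3 -> e x2 x3 -> e x1 y1 -> e x2 y1 -> e x2 y2 -> e x3 y2 -> e x3 y3 ->
  e x1 y3 -> ~~ e x3 y1 -> ~~ e x1 y2 -> ~~ e x2 y3 -> ~~ e y1 y2 -> ~~ e y1 y3 ->
  ~~ e y2 y3 -> has_induced_S3 e.
Proof.
move=> U *; exists (fun i : 'I_6 => nth x1 [:: x1; x2; x3; y1; y2; y3] i); split.
  by move=> i j /eqP; rewrite nth_uniq // => /eqP /val_inj.
case=> [[|[|[|[|[|[|//]]]]]] ?] [[|[|[|[|[|[|//]]]]]] ?] /=;
  first [by rewrite eirr | done | by rewrite esym | by apply/negbTE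
        | by rewrite esym; apply/negbTE].
Qed.

Section Triangulation.
Variables (p : T -> nat) (S : {set T}).
Hypothesis tS : triangulation p S.

Let p_inj : injective p. Proof. by case: tS. Qed.
Let ncr : noncrossing p S. Proof. by case: tS. Qed.
Let tri : triangulated p S. Proof. by case: tS. Qed.

Lemma neq_of_pos y z : p y != p z -> y != z.
Proof. by apply: contra_neq => ->. Qed.

Lemma ear_pos_neq v u w : ear S v u w -> [/\ p v != p u, p v != p w & p u != p w].
Proof.
case=> _ uS wS euw vN; rewrite !(inj_eq p_inj) (edge_neq euw).
by split=> //; apply: edge_neq; rewrite vN // eqxx ?orbT.
Qed.

Lemma ear_beside v u w z : ear S v u w -> z \in S -> p z != p v -> p z != p u ->
  beside (p v) (p u) (p w) (p z).
Proof.
case=> vS uS wS euw vN zS zv zu; have evu : e v u by rewrite vN // eqxx.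
have [k kS [evk eku]] := side_triangle tS vS uS zS evu zv zu.
suff <- : k = w by [].
by move: evk; rewrite vN // => /orP[/eqP ku|/eqP //]; move: eku; rewrite ku eirr.
Qed.

Lemma ear_cut_off v u w z : ear S v u w -> z \in S -> z != v -> z != u -> z != w ->
  crossing (p u) (p w) (p v) (p z).
Proof.
move=> E zS; rewrite -!(inj_eq p_inj) => zv zu zw; have [vu vw uw] := ear_pos_neq E.
have := ear_beside E zS zv zu; have := ear_beside (ear_sym E) zS zv zw.
by geometry using zv zu zw vu vw uw.
Qed.

Lemma ear_chord_nocross v u w a b : ear S v u w -> a \in S -> b \in S -> a != v -> b != v ->
  ~~ crossing (p a) (p b) (p v) (p u).
Proof.
move=> E aS bS av bv; have [vu vw uw] := ear_pos_neq E.
have cut y : y \in S -> y != v -> [\/ y = u, y = w | crossing (p u) (p w) (p v) (p y)].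
  move=> yS yv; case: (eqVneq y u) => [|yu]; first by constructor 1.
  case: (eqVneq y w) => [|yw]; first by constructor 2.
  by constructor 3; apply: ear_cut_off.
by case: (cut a aS av) => [->|->|]; case: (cut b bS bv) => [->|->|];
  geometry using vu vw uw.
Qed.

Lemma triangulation_delete_ear v u w : ear S v u w -> triangulation p (S :\ v).
Proof.
move=> E; have [vS uS wS _ vN] := E; split=> //.
  move=> a b c d; rewrite !in_setD1 => /andP[_ aS] /andP[_ bS] /andP[_ cS] /andP[_ dS].
  exact: ncr.
move=> a b; rewrite !in_setD1 => /andP[av aS] /andP[bv bS] ab nab.
have [c [d [cS dS ecd X]]] := tri aS bS ab nab.
have ear_edge y : y \in S -> e v y -> ~~ crossing (p a) (p b) (p v) (p y).
  move=> yS; rewrite vN // => /orP[]/eqP->.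
    exact: ear_chord_nocross E aS bS av bv.
  exact: ear_chord_nocross (ear_sym E) aS bS av bv.
case: (eqVneq c v) => [cv|cv]; first by subst c; rewrite (negbTE (ear_edge d dS ecd)) in X.
case: (eqVneq d v) => [dv|dv].
  have evc : e v c by rewrite -dv esym.
  by subst d; rewrite crossingCr (negbTE (ear_edge c cS evc)) in X.
by exists c, d; rewrite !in_setD1 cv dv.
Qed.

Lemma small_triangulation_complete : #|S| <= 3 -> {in S &, forall a b, a != b -> e a b}.
Proof.
move=> small a b aS bS ab; apply/idPn => nab.
have [c [d [cS dS _ X]]] := tri aS bS ab nab.
have /card_uniqP card4 : uniq [:: a; b; c; d].
  rewrite -(map_inj_uniq p_inj) /= !inE; move: ab; rewrite -(inj_eq p_inj).
  by geometry using X.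
have : #|[:: a; b; c; d]| <= #|S|.
  by apply/subset_leq_card/subsetP => y; rewrite !inE => /or4P[]/eqP->.
by rewrite card4 /=; lia.
Qed.

Lemma inner_edge_exists : 3 <= #|S| -> exists a b,
  [/\ a \in S, b \in S, e a b, p a < p b & [exists z in S, between (p a) (p b) (p z)]].
Proof.
move=> big; have [a0 a0S] : exists a0, a0 \in S by apply/card_gt0P; lia.
case: (@arg_minnP _ a0 (fun y => y \in S) p a0S) => a aS a_min.
case: (@arg_maxnP _ a0 (fun y => y \in S) p a0S) => b bS b_max.
have [z] : exists z, z \in S :\ a :\ b.
  apply/card_gt0P; move: big; rewrite (cardsD1 a S) (cardsD1 b (S :\ a)) aS.
  by case: (b \in S :\ a) => /=; lia.
rewrite !in_setD1 -!(inj_eq p_inj) => /and3P[zb za zS].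
have := a_min z zS; have := b_max z zS => zb' za'.
have ab : p a < p b by lia.
have eab : e a b.
  apply: (edge_of_empty_side tS aS bS); first by rewrite -(inj_eq p_inj) neq_ltn ab.
  by right=> y yS; have := a_min y yS; have := b_max y yS; geometry using ab.
exists a, b; split=> //; apply/exists_inP; exists z => //.
by geometry using za zb za' zb'.
Qed.

Lemma ear_exists : 3 <= #|S| -> exists v u w, ear S v u w.
Proof.
move=> /inner_edge_exists [a0 [b0 [a0S b0S eab0 ab0 z0]]].
pose spanning (ab : T * T) := [&& ab.1 \in S, ab.2 \in S, e ab.1 ab.2, p ab.1 < p ab.2 &
  [exists z in S, between (p ab.1) (p ab.2) (p z)]].
case: (@arg_minnP _ (a0, b0) spanning (fun ab => p ab.2 - p ab.1)); first exact/and5P.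
move=> [a b] /and5P[/= aS bS eab ab /exists_inP[z zS azb]] ab_min.
have [k kS [akb eak ekb]] := inner_triangle tS aS bS zS eab azb.
have min_span x y z' : x \in S -> y \in S -> z' \in S -> e x y -> p x < p y ->
    between (p x) (p y) (p z') -> p b - p a <= p y - p x.
  move=> xS yS z'S exy xy xz'y; apply: (ab_min (x, y)).
  by rewrite /spanning /= xS yS exy xy; apply/exists_inP; exists z'.
exists k, a, b; split=> // y yS; apply/idP/idP => [eky|/orP[]/eqP-> //]; last by rewrite esym.
apply: contraTT eky; rewrite negb_or -!(inj_eq p_inj) => /andP[ya yb].
apply/negP => eky; have yk : p y != p k by rewrite (inj_eq p_inj) eq_sym edge_neq.
have := min_span a k y aS kS yS eak; have := min_span k b y kS bS yS ekb.
have := ncr aS bS kS yS eab eky.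
by geometry using ab akb ya yb yk.
Qed.

Lemma neighbour_beyond v u w x y : ear S v u w -> x \in S -> e u x -> e w x -> x != v ->
  y \in S -> e u y -> y != v -> y != w -> y != x -> crossing (p u) (p x) (p w) (p y).
Proof.
move=> E xS eux ewx xv yS euy yv yw yx; have [_ uS wS _ _] := E.
have xu : x != u by rewrite eq_sym edge_neq.
have xw : x != w by rewrite eq_sym edge_neq.
have yu : y != u by rewrite eq_sym edge_neq.
have cx := ear_cut_off E xS xv xu xw; have cy := ear_cut_off E yS yv yu yw.
have := ncr wS xS uS yS ewx euy; move: yx; rewrite -(inj_eq p_inj) => yx.
by geometry using cx cy yx.
Qed.

Lemma ear_fans_induce_S3 v u w x y1 y2 : ear S v u w -> x \in S -> e u x -> e w x ->
  x != v -> y1 \in S :\ v -> e u y1 -> y1 \notin [:: w; x] ->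
  y2 \in S :\ v -> e w y2 -> y2 \notin [:: u; x] -> has_induced_S3 e.
Proof.
move=> E xS eux ewx xv; rewrite !in_setD1 !inE.
move=> /andP[y1v y1S] euy1 /norP[y1w y1x] /andP[y2v y2S] ewy2 /norP[y2u y2x].
have [vS uS wS euw vN] := E; have [vu vw uw] := ear_pos_neq E.
have xu : x != u by rewrite eq_sym edge_neq.
have xw : x != w by rewrite eq_sym edge_neq.
have cx := ear_cut_off E xS xv xu xw.
have c1 := neighbour_beyond E xS eux ewx xv y1S euy1 y1v y1w y1x.
have c2 := neighbour_beyond (ear_sym E) xS ewx eux xv y2S ewy2 y2v y2u y2x.
have [py1u py1x] : p y1 != p u /\ p y1 != p x by geometry using c1.
have [py2w py2x] : p y2 != p w /\ p y2 != p x by geometry using c2.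
have [k1 k1S [euk1 ek1x b1]] := side_triangle tS uS xS y1S eux py1u py1x.
have [k2 k2S [ewk2 ek2x b2]] := side_triangle tS wS xS y2S ewx py2w py2x.
have d1 : crossing (p u) (p x) (p w) (p k1) by geometry using c1 b1.
have d2 : crossing (p w) (p x) (p u) (p k2) by geometry using c2 b2.
have not_v k : k \in S -> p k != p u -> p k != p w -> ~~ e v k.
  by move=> kS ku kw; rewrite vN // negb_or -!(inj_eq p_inj) ku kw.
have evu : e v u by rewrite vN // eqxx.
have evw : e v w by rewrite vN // eqxx orbT.
apply: (@induced_S3_of u w x v k2 k1) => //; try by rewrite esym.
- rewrite -(map_inj_uniq p_inj) /= !inE.
  by geometry using vu vw uw cx d1 d2.
- by rewrite esym; apply: not_v => //; geometry using cx.
- apply/negP => euk2; have := ncr wS xS uS k2S ewx euk2.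
  by geometry using d2.
- apply/negP => ewk1; have := ncr uS xS wS k1S eux ewk1.
  by geometry using d1.
- by apply: not_v => //; geometry using d2.
- by apply: not_v => //; geometry using d1.
- apply/negP => ek2k1; have := ncr uS xS k2S k1S eux ek2k1.
  by geometry using d1 d2.
Qed.

Lemma next_ear v u w : ~ has_induced_S3 e -> ear S v u w -> 3 < #|S| ->
  exists x, ear (S :\ v) u w x \/ ear (S :\ v) w u x.
Proof.
move=> noS3 E big; have [vS uS wS euw vN] := E; have [vu vw uw] := ear_pos_neq E.
have [uv wv wu] : [/\ u != v, w != v & w != u].
  by split; apply: neq_of_pos; rewrite eq_sym.
have [z] : exists z, z \in S :\ v :\ u :\ w.
  apply/card_gt0P; move: big.
  rewrite (cardsD1 v S) (cardsD1 u (S :\ v)) (cardsD1 w (S :\ v :\ u)).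
  by rewrite !in_setD1 vS uS wS uv wv wu /=; lia.
rewrite !in_setD1 => /and4P[zw zu zv zS].
have cz := ear_cut_off E zS zv zu zw.
have [pzu pzw] : p z != p u /\ p z != p w by geometry using cz.
have [x xS [eux exw bx]] := side_triangle tS uS wS zS euw pzu pzw.
have ewx : e w x by rewrite esym.
have xv : x != v by apply: neq_of_pos; geometry using cz bx.
have [uSv wSv xSv] : [/\ u \in S :\ v, w \in S :\ v & x \in S :\ v].
  by rewrite !in_setD1 uv wv xv.
have ear_of a b : a \in S :\ v -> b \in S :\ v -> e a b -> e a x -> e b x ->
    ~~ [exists y in S :\ v, e a y && (y \notin [:: b; x])] -> ear (S :\ v) a b x.
  move=> aSv bSv eab eax ebx none; split=> // y ySv.
  apply/idP/idP => [eay|/orP[]/eqP-> //]; apply: contraNT none => ybx.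
  by apply/exists_inP; exists y; rewrite // eay !inE.
exists x.
case: (boolP [exists y in S :\ v, e u y && (y \notin [:: w; x])]); last first.
  by move=> none; left; apply: ear_of.
move=> /exists_inP[y1 y1Sv /andP[euy1 y1n]].
case: (boolP [exists y in S :\ v, e w y && (y \notin [:: u; x])]); last first.
  by move=> none; right; apply: ear_of; rewrite // esym.
move=> /exists_inP[y2 y2Sv /andP[ewy2 y2n]]; case: noS3.
exact: (ear_fans_induce_S3 E xS eux ewx xv y1Sv euy1 y1n y2Sv ewy2 y2n).
Qed.

End Triangulation.

Definition overlap (I J : nat * nat) := (I.1 < J.2) && (J.1 < I.2).

Lemma overlapC I J : overlap I J = overlap J I.
Proof. by rewrite /overlap andbC. Qed.

Definition interval_model (I : T -> nat * nat) S := (forall z, (I z).1 < (I z).2) /\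
  {in S &, forall a b, a != b -> e a b = overlap (I a) (I b)}.

Lemma interval_model_complete S :
  {in S &, forall a b, a != b -> e a b} -> interval_model (fun=> (0, 1)) S.
Proof. by move=> complete; split=> // a b aS bS ab; rewrite complete. Qed.

Lemma interval_model_add_ear S v u w I M : ear S v u w -> interval_model I (S :\ v) ->
    {in S :\ v, forall z, (I z).2 <= M} -> (I u).2 = M -> (I w).2 = M ->
  exists I' M', [/\ interval_model I' S, {in S, forall z, (I' z).2 <= M'} &
    [/\ (I' v).2 = M', (I' u).2 = M' & (I' w).2 = M']].
Proof.
move=> [vS uS wS euw vN] [I_valid I_model] I_M uM wM.
have [uv wv] : u != v /\ w != v.
  by split; rewrite eq_sym edge_neq // vN // eqxx ?orbT.
pose I' z := if z == v then (M, M.+1)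
  else if (z == u) || (z == w) then ((I z).1, M.+1) else I z.
have I'v : I' v = (M, M.+1) by rewrite /I' eqxx.
have I'_stretch z : z != v ->
    (I' z).1 = (I z).1 /\ ((I' z).2 = (I z).2 \/ (I z).2 = M /\ (I' z).2 = M.+1).
  move=> zv; rewrite /I' (negbTE zv).
  by case: ifP => [/orP[]/eqP->|_]; split=> //; [right | right | left].
have v_model y : y \in S -> y != v -> e v y = overlap (I' v) (I' y).
  move=> yS yv; have ySv : y \in S :\ v by rewrite in_setD1 yv.
  have y_valid := I_valid y; have yM := I_M y ySv.
  rewrite vN // /overlap I'v /I' (negbTE yv); case: ifP => _ /=; lia using y_valid yM.
exists I', M.+1; split.
- split=> [z|a b aS bS ab].
    case: (eqVneq z v) => [->|zv]; first by rewrite I'v.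
    have [z1 z2] := I'_stretch z zv; have z_valid := I_valid z.
    lia using z1 z2 z_valid.
  case: (eqVneq a v) => [av|av]; first by subst a; apply: v_model; rewrite // eq_sym.
  case: (eqVneq b v) => [bv|bv]; first by subst b; rewrite esym overlapC v_model.
  have [aSv bSv] : a \in S :\ v /\ b \in S :\ v by rewrite !in_setD1 av bv.
  have [a1 a2] := I'_stretch a av; have [b1 b2] := I'_stretch b bv.
  have va := I_valid a; have vb := I_valid b; have Ma := I_M a aSv; have Mb := I_M b bSv.
  by rewrite I_model // /overlap; lia using a1 a2 b1 b2 va vb Ma Mb.
- move=> z zS; case: (eqVneq z v) => [->|zv]; first by rewrite I'v.
  have [_ z2] := I'_stretch z zv; have zM : (I z).2 <= M by rewrite I_M // in_setD1 zv.
  lia using z2 zM.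
- by rewrite I'v /I' (negbTE uv) (negbTE wv) !eqxx ?orbT.
Qed.

Lemma ear_interval_model p S v u w : ~ has_induced_S3 e -> triangulation p S ->
    ear S v u w ->
  exists I M, [/\ interval_model I S, {in S, forall z, (I z).2 <= M} &
    [/\ (I v).2 = M, (I u).2 = M & (I w).2 = M]].
Proof.
move=> noS3; have [n] := ubnP #|S|; elim: n S v u w => // n IH S v u w cardS tS E.
case: (leqP #|S| 3) => [small|big].
  exists (fun=> (0, 1)), 1; split=> //.
  exact: interval_model_complete (small_triangulation_complete tS small).
have [vS _ _ _ _] := E.
have cardSv : #|S :\ v| < n by move: cardS; rewrite (cardsD1 v S) vS; lia.
have [I [M [model I_M uM wM]]] : exists I M, [/\ interval_model I (S :\ v),
    {in S :\ v, forall z, (I z).2 <= M}, (I u).2 = M & (I w).2 = M].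
  have [x [] /(IH _ _ _ _ cardSv (triangulation_delete_ear tS E))] := next_ear tS noS3 E big.
    by case=> I [M [? ? [? ? _]]]; exists I, M.
  by case=> I [M [? ? [? ? _]]]; exists I, M.
exact: interval_model_add_ear E model I_M uM wM.
Qed.

Lemma B0_of_interval_model I : interval_model I [set: T] -> B0 e.
Proof.
move=> [I_valid I_model]; exists (fun z => SegPath true 0 (I z).1 (I z).2); split.
  by move=> z; rewrite /seg_valid /=; have := I_valid z; lia.
move=> a b ab; rewrite I_model ?inE // /overlap /share_edge /=.
by have := I_valid a; have := I_valid b; lia.
Qed.

Lemma noncrossing_of_outerplanar p :
    (forall a b c d, e a b -> e c d -> ~ (p a < p c /\ p c < p b /\ p b < p d)) ->
  noncrossing p [set: T].
Proof.
move=> no_interleaving a b c d _ _ _ _ eab ecd; apply/negP => X.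
have eba : e b a by rewrite esym.
have edc : e d c by rewrite esym.
move: (no_interleaving _ _ _ _ eab ecd) (no_interleaving _ _ _ _ eba ecd).
move: (no_interleaving _ _ _ _ eab edc) (no_interleaving _ _ _ _ eba edc).
move: (no_interleaving _ _ _ _ ecd eab) (no_interleaving _ _ _ _ edc eab).
move: (no_interleaving _ _ _ _ ecd eba) (no_interleaving _ _ _ _ edc eba).
by geometry using X.
Qed.

Lemma triangulated_of_maximal p : injective p ->
    (forall a b c d, e a b -> e c d -> ~ (p a < p c /\ p c < p b /\ p b < p d)) ->
    (forall x y, x != y -> ~~ e x y -> ~ outerplanar (add_edge e x y)) ->
  triangulated p [set: T].
Proof.
move=> p_inj no_interleaving maximal a b _ _ ab nab.
case: (boolP [exists c, exists d, e c d && crossing (p a) (p b) (p c) (p d)]).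
  by case/existsP=> c /existsP[d /andP[ecd X]]; exists c, d; rewrite !inE.
move=> none; case: (maximal a b ab nab); exists p; split=> // a' b' c' d'.
have nX c d : e c d -> ~~ crossing (p a) (p b) (p c) (p d).
  move=> ecd; apply: contraNN none => X.
  by apply/existsP; exists c; apply/existsP; exists d; rewrite ecd.
have pab : p a != p b by rewrite (inj_eq p_inj).
rewrite /add_edge => /or3P[ea'b'|/andP[/eqP-> /eqP->]|/andP[/eqP-> /eqP->]]
  /or3P[ec'd'|/andP[/eqP-> /eqP->]|/andP[/eqP-> /eqP->]].
all: first [exact: no_interleaving | have := nX _ _ ea'b' | have := nX _ _ ec'd' | idtac].
all: by geometry using pab.
Qed.

End Polygon.

Theorem theorem4p6 (T : finType) (e : rel T) :
  simple_graph e -> maximal_outerplanar e ->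
  (B0 e <-> ~ has_induced_S3 e).
Proof.
move=> [esym eirr] [[pos [pos_inj no_interleaving]] maximal].
split=> [|noS3]; first exact: B0_no_induced_S3.
have tT : triangulation e pos [set: T].
  split=> //; first exact: noncrossing_of_outerplanar.
  exact: triangulated_of_maximal.
suff [I model] : exists I, interval_model e I [set: T] by exact: B0_of_interval_model model.
case: (leqP #|T| 3) => [small|big].
  by exists (fun=> (0, 1)); apply/interval_model_complete/(small_triangulation_complete tT); rewrite cardsT.
have [v [u [w E]]] : exists v u w, ear e [set: T] v u w.
  by apply: (ear_exists esym eirr tT); rewrite cardsT ltnW.
by have [I [M [model _ _]]] := ear_interval_model esym eirr noS3 tT E; exists I.
Qed.
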